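(* Let $T$ be a finite tree and let $P=p_0p_1\dots p_k$ ($k\ge1$) be a path in $T$ such that each of $p_1,\dots,p_{k-1}$ has degree $2$ in $T$. Let $B$ be the vertex set of the component containing $p_k$ of the graph obtained from $T$ by deleting the edges of $P$. Let $T'$ be the tree obtained from $T$ by deleting all edges between $p_k$ and $\Gamma(p_k)\setminus\{p_{k-1}\}$ and adding the edges between $p_0$ and $\Gamma(p_k)\setminus\{p_{k-1}\}$ instead. If $k$ is even, then for every $\ell\ge1$, \[\omega_{\ell}(p_0,T[B\cup P])-\omega_{\ell}(p_0,P)\leq \omega_{\ell}(p_0,T'[B\cup P])-\omega_{\ell}(p_0,P).\]
   Context: $\Gamma(v)$ is the set of neighbours of $v$ in $T$. For a graph $G$ containing the vertices of $B$ and $P$, $G[B\cup P]$ is the subgraph of $G$ induced by $B\cup\{p_0,\dots,p_k\}$. For a graph $G$, a vertex $x$ and $\ell\ge1$, $\omega_\ell(x,G)$ is the number of walks of length $\ell$ in $G$ starting at $x$. $P$ is regarded as a graph (the path). *)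

From HB Require Import structures.
From mathcomp Require Import all_boot all_order all_algebra.
Set Implicit Arguments. Unset Strict Implicit. Unset Printing Implicit Defensive.

Definition is_tree (V : finType) (e : rel V) : Prop :=
  [/\ symmetric e, irreflexive e,
      (forall x y : V, connect e x y) &
      (forall c : seq V, uniq c -> 2 < size c -> ~~ cycle e c)].

Definition deg (V : finType) (e : rel V) (v : V) : nat := #|[set y | e v y]|.

Definition nwalks (V : finType) (e : rel V) (l : nat) (x : V) : nat :=
  #|[set t : l.-tuple V | path e x t]|.

Definition induced (V : finType) (e : rel V) (S : {set V}) : rel V :=
  fun x y => [&& x \in S, y \in S & e x y].

Definition path_edge (V : finType) (p : nat -> V) (k : nat) : rel V :=
  fun x y => [exists i : 'I_k,
                ((x == p i) && (y == p i.+1)) || ((y == p i) && (x == p i.+1))].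

Definition path_verts (V : finType) (p : nat -> V) (k : nat) : {set V} :=
  [set p (val i) | i : 'I_k.+1].

Definition del_path (V : finType) (e : rel V) (p : nat -> V) (k : nat) : rel V :=
  fun x y => e x y && ~~ path_edge p k x y.

Definition compB (V : finType) (e : rel V) (p : nat -> V) (k : nat) : {set V} :=
  [set x | connect (del_path e p k) (p k) x].

Definition Nk (V : finType) (e : rel V) (p : nat -> V) (k : nat) : {set V} :=
  [set y | e (p k) y & y != p k.-1].

Definition transfer (V : finType) (e : rel V) (p : nat -> V) (k : nat) : rel V :=
  fun x y =>
    [|| [&& e x y, ~~ ((x == p k) && (y \in Nk e p k))
               & ~~ ((y == p k) && (x \in Nk e p k))],
        (x == p 0) && (y \in Nk e p k)
      | (y == p 0) && (x \in Nk e p k)].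

(* Reversing the path, p_i |-> p_(k-i), maps T[B ∪ P] isomorphically onto T'[B ∪ P]:
   in the first graph the rest of B hangs at p_k, in the second at p_0.  For even k the
   reversal fixes the midpoint p_(k/2), so both graphs have equally many walks from it.
   Between p_0 and the midpoint, T[B ∪ P] has only the path edges, which are also edges
   of T'[B ∪ P]; so a walk from p_0 in T[B ∪ P] is a walk in T'[B ∪ P] until it first
   reaches the midpoint, and counting walks by their first visit there gives the
   inequality.  Identifying the edges of the two
   induced graphs uses that T is a tree: B meets P only in p_k, since a route from p_k to
   an earlier p_i avoiding the path edges would close a cycle. *)

From HB Require Import structures.
From mathcomp Require Import all_boot all_order all_algebra zify.
Import GRing.Theory Num.Theory.

Section WalkCount.
Variable V : finType.
Implicit Types (r s : rel V) (x y : V).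

Lemma nwalks_sum r l x : nwalks r l x = \sum_(t : l.-tuple V) path r x t.
Proof.
rewrite /nwalks -sum1_card big_mkcond /=; apply: eq_bigr => t _.
by rewrite inE; case: path.
Qed.

Lemma nwalks0 r x : nwalks r 0 x = 1.
Proof.
rewrite nwalks_sum (eq_bigr (fun _ => 1%N)) => [|t _]; last by rewrite tuple0.
by rewrite sum_nat_const card_tuple.
Qed.

Lemma nwalksS r l x : nwalks r l.+1 x = \sum_(y | r x y) nwalks r l y.
Proof.
rewrite nwalks_sum (reindex (fun u : V * l.-tuple V => [tuple of u.1 :: u.2])) /=.
  rewrite -(pair_bigA _ (fun y (t : l.-tuple V) => (path r x (y :: t) : nat))).
  rewrite [RHS]big_mkcond /=; apply: eq_bigr => y _.
  by case: (r x y); rewrite ?nwalks_sum // big1.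
exists (fun t : l.+1.-tuple V => (thead t, [tuple of behead t])).
  by case=> y t _ /=; congr pair; apply: val_inj.
by move=> t _; rewrite [t in RHS]tuple_eta.
Qed.

Lemma nwalks_iso r s (f : V -> V) : injective f ->
    (forall x y, r x y = s (f x) (f y)) ->
  forall l x, nwalks r l x = nwalks s l (f x).
Proof.
move=> f_inj rs; elim=> [|l IHl] x; first by rewrite !nwalks0.
rewrite !nwalksS [RHS](reindex_inj f_inj) /=.
by apply: eq_big => [y|y _]; rewrite ?rs ?IHl.
Qed.

(* An [r]-walk from [Q] is an [s]-walk until it first reaches [c]; from there on the
   bound at [c] takes over. *)
Lemma nwalks_le_on r s (Q : pred V) c :
    (forall x, Q x -> x != c -> forall y, r x y -> s x y /\ Q y) ->
    (forall l, nwalks r l c <= nwalks s l c) ->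
  forall l x, Q x -> nwalks r l x <= nwalks s l x.
Proof.
move=> rsQ le_c; elim=> [|l IHl] x Qx; first by rewrite !nwalks0.
have [->|x_c] := eqVneq x c; first exact: le_c.
rewrite !nwalksS (@leq_trans (\sum_(y | r x y) nwalks s l y)) //.
  by apply: leq_sum => y rxy; apply: IHl; case: (rsQ x Qx x_c y rxy).
rewrite [leqRHS]big_mkcond [leqLHS]big_mkcond leq_sum // => y _.
by case rxy: (r x y); rewrite ?(rsQ x Qx x_c y rxy).1.
Qed.

End WalkCount.

Lemma path_rcons_has_succ {T : eqType} {r : rel T} {x : T} {s y z} :
  path r x (rcons s y) -> z \in s -> exists w, r z w.
Proof.
move=> + z_s; case/splitPr: z_s => s1 s2.
rewrite rcons_cat cat_path rcons_cons /= => /and3P [_ _].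
by case: s2 => [|a s2] /andP [rz _]; eexists; exact: rz.
Qed.

Section PathInTree.
Variables (V : finType) (e : rel V) (p : nat -> V) (k : nat).
Hypothesis e_tree : is_tree e.
Hypothesis k_gt0 : 0 < k.
Hypothesis p_inj : {in [pred i | i <= k] &, injective p}.
Hypothesis p_edge : forall i, i < k -> e (p i) (p i.+1).
Hypothesis p_deg2 : forall i, 0 < i < k -> deg e (p i) = 2.

Local Notation P := (path_verts p k).
Local Notation B := (compB e p k).
Local Notation N := (Nk e p k).
Local Notation dp := (del_path e p k).
Local Notation pe := (path_edge p k).

Lemma p_eq i j : i <= k -> j <= k -> (p i == p j) = (i == j).
Proof. by move=> ik jk; apply/eqP/eqP => [/p_inj->|->]. Qed.

Lemma e_sym : symmetric e.
Proof. by case: e_tree. Qed.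

Lemma e_irr : irreflexive e.
Proof. by case: e_tree. Qed.

Lemma path_edge_sym : symmetric pe.
Proof. by move=> x y; apply/existsP/existsP => -[i]; exists i; rewrite orbC. Qed.

Lemma path_edge_inv x y : pe x y ->
  exists2 i, i < k & (x = p i /\ y = p i.+1) \/ (y = p i /\ x = p i.+1).
Proof.
case/existsP => i /orP [] /andP [/eqP -> /eqP ->]; exists i => //; by [left|right].
Qed.

Lemma path_edge_step i : i < k -> pe (p i) (p i.+1).
Proof. by move=> ik; apply/existsP; exists (Ordinal ik); rewrite !eqxx. Qed.

Lemma path_edge_step_rev i : 0 < i <= k -> pe (p i) (p i.-1).
Proof. by case: i => // i ik; rewrite path_edge_sym path_edge_step. Qed.

Lemma path_edge_sub x y : pe x y -> e x y.
Proof.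
by case/path_edge_inv => i ik [] [-> ->]; [|rewrite e_sym]; exact: p_edge.
Qed.

Lemma mem_path_verts i : i <= k -> p i \in P.
Proof. by move=> ik; apply/imsetP; exists (Ordinal (ik : i < k.+1)). Qed.

Lemma path_verts_inv x : x \in P -> exists2 i, i <= k & x = p i.
Proof. by case/imsetP => i _ ->; exists i; rewrite // -ltnS. Qed.

Lemma path_edge_verts x y : pe x y -> (x \in P) && (y \in P).
Proof.
by case/path_edge_inv => i ik [] [-> ->]; rewrite !mem_path_verts // ltnW.
Qed.

Lemma inner_nbr j y : 0 < j < k -> e (p j) y -> y = p j.-1 \/ y = p j.+1.
Proof.
move=> j_in ejy.
have e_prev : e (p j) (p j.-1) by apply: path_edge_sub; rewrite path_edge_step_rev; lia.
have e_next : e (p j) (p j.+1) by apply: p_edge; lia.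
have nbrs : [set p j.-1; p j.+1] = [set y | e (p j) y].
  apply/eqP; rewrite eqEcard cards2 p_eq; [|lia|lia].
  rewrite -/(deg e (p j)) p_deg2 // (_ : (j.-1 == j.+1) = false); last by lia.
  by rewrite andbT; apply/subsetP => z; rewrite !inE => /orP [] /eqP ->.
have : y \in [set y | e (p j) y] by rewrite inE.
by rewrite -nbrs !inE => /orP [] /eqP ->; [left|right].
Qed.

Lemma inner_edge_path j y : 0 < j < k -> e (p j) y -> pe (p j) y.
Proof.
move=> j_in /(inner_nbr _ _ j_in) [] ->; last by rewrite path_edge_step; lia.
by rewrite path_edge_step_rev; lia.
Qed.

Lemma del_path_inner j y : 0 < j < k -> dp (p j) y = false.
Proof.
move=> j_in; rewrite /del_path; case e_py: (e _ _) => //=.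
by rewrite (inner_edge_path _ _ j_in e_py).
Qed.

Lemma del_path_sym : symmetric dp.
Proof. by move=> x y; rewrite /del_path e_sym path_edge_sym. Qed.

Lemma path_p_iota i n : i + n <= k -> path e (p i) [seq p j | j <- iota i.+1 n].
Proof. by elim: n i => //= n IHn i le_k; rewrite p_edge ?IHn //; lia. Qed.

Lemma last_p_iota i n : last (p i) [seq p j | j <- iota i.+1 n] = p (i + n).
Proof. by elim: n i => [|n IHn] i /=; rewrite ?addn0 ?IHn ?addSnnS. Qed.

(* A simple [dp]-path from [p k] back to [p 0] closes a cycle with [P]. *)
Lemma no_del_path_pk_p0 q :
  path dp (p k) (rcons q (p 0)) -> uniq (p k :: rcons q (p 0)) -> False.
Proof.
move=> dp_q; rewrite -rcons_cons rcons_uniq /= in_cons negb_or.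
case/and3P => /andP [_ p0_q] pk_q uniq_q.
have q_P z : z \in q -> z \notin P.
  move=> z_q; apply/negP => /path_verts_inv [j jk z_pj]; subst z.
  have [j0|j_gt0] := posnP j; first by move: z_q; rewrite j0 (negPf p0_q).
  have [jk'|kj] := ltnP j k; last by move: z_q; rewrite (_ : j = k) ?(negPf pk_q); lia.
  by have [w] := path_rcons_has_succ dp_q z_q; rewrite del_path_inner ?j_gt0.
move: dp_q; rewrite rcons_path => /andP [dp_q dp_last].
set c := [seq p j | j <- iota 0 k.+1] ++ q.
have uniq_c : uniq c.
  rewrite cat_uniq uniq_q andbT map_inj_in_uniq ?iota_uniq; last first.
    by move=> a b; rewrite !mem_iota => ha hb; apply: p_inj; rewrite inE; lia.
  apply/hasPn => z /q_P; apply: contra => /mapP [j]; rewrite mem_iota => jk ->.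
  by rewrite mem_path_verts //; lia.
have [size_c|] := ltnP 2 (size c); last first.
  rewrite size_cat size_map size_iota => le2; have k1 : k = 1 by lia.
  case: q {uniq_c q_P pk_q p0_q uniq_q c} dp_q dp_last le2 => [_|] /=; last by lia.
  have -> : p 0 = p k.-1 by rewrite k1.
  by rewrite /del_path path_edge_step_rev ?andbF // k_gt0 leqnn.
have cycle_c : cycle e c.
  rewrite (cycle_path (p 0)) /c last_cat /= last_p_iota cat_path path_p_iota //.
  rewrite last_p_iota /= (sub_path _ dp_q) => [|x y /andP []//].
  by rewrite andbT; case/andP: dp_last.
by case: e_tree => _ _ _ /(_ c uniq_c size_c); rewrite cycle_c.
Qed.

Lemma p_notin_B i : i < k -> p i \notin B.
Proof.
move=> ik; apply/negP; rewrite inE => /connectP [q dp_q last_q].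
case/shortenP: dp_q last_q => {}q dp_q uniq_q _.
case/lastP: q dp_q uniq_q => [|q z] dp_q uniq_q; rewrite ?last_rcons => last_q.
  by move/eqP: last_q; rewrite p_eq ?(ltnW ik) //; lia.
subst z; have [i0|i_gt0] := posnP i; first by subst i; apply: no_del_path_pk_p0 dp_q uniq_q.
by move: dp_q; rewrite rcons_path del_path_sym del_path_inner ?i_gt0 ?andbF.
Qed.

Lemma B_cap_P x : x \in B -> x \in P -> x = p k.
Proof.
move=> xB /path_verts_inv [i ik x_pi]; subst x.
by have [/p_notin_B/negP//|ki] := ltnP i k; rewrite (_ : i = k) //; lia.
Qed.

Lemma pk_in_B : p k \in B.
Proof. by rewrite inE connect0. Qed.

Lemma N_sub_BDP y : y \in N -> y \in B :\: P.
Proof.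
rewrite !inE => /andP [e_pk_y y_pk'].
have dp_pk_y : dp (p k) y.
  rewrite /del_path e_pk_y; apply/negP => /path_edge_inv [i ik] [] [].
    by move/eqP; rewrite p_eq; lia.
  move=> y_pi /eqP; rewrite p_eq ?(ltnW ik) // => /eqP ki.
  by rewrite y_pi (_ : i = k.-1) ?eqxx in y_pk'; lia.
have yB : y \in B by rewrite inE connect1.
rewrite (connect1 dp_pk_y) andbT; apply/negP => /(B_cap_P _ yB) y_pk.
by rewrite y_pk e_irr in e_pk_y.
Qed.

Lemma N_notin_P y : y \in N -> y \notin P.
Proof. by move/N_sub_BDP; rewrite inE => /andP []. Qed.

Lemma B_edge_p0 y : y \in B -> e y (p 0) -> pe y (p 0).
Proof.
move=> yB e_y_p0; apply: contraT => not_pe.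
have : p 0 \in B.
  by rewrite /compB !inE in yB *; apply: connect_trans yB (connect1 _); rewrite /del_path e_y_p0.
by rewrite (negPf (p_notin_B _ k_gt0)).
Qed.

Lemma P_edge_path x y : x \in P -> y \in P -> e x y -> pe x y.
Proof.
move=> /path_verts_inv [i ik ->] /path_verts_inv [j jk ->] e_ij.
have [i_in|] := boolP (0 < i < k); first exact: inner_edge_path.
have [j_in|] := boolP (0 < j < k).
  by rewrite path_edge_sym inner_edge_path // e_sym.
move=> j_end i_end; have [ij_eq|ij] := eqVneq i j; first by rewrite ij_eq e_irr in e_ij.
have [[i0 jk'] | [ik' j0]] : (i = 0 /\ j = k) \/ (i = k /\ j = 0) by lia.
  by rewrite i0 jk' path_edge_sym B_edge_p0 ?pk_in_B // e_sym -i0 -jk'.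
by rewrite ik' j0 B_edge_p0 ?pk_in_B // -ik' -j0.
Qed.

Lemma P_BDP_edge x y : x \in P -> y \in B :\: P -> e x y -> (x == p k) && (y \in N).
Proof.
move=> /path_verts_inv [i ik ->]; rewrite inE => /andP [yP' yB] e_iy.
have pe_yP : ~~ pe (p i) y by apply: contra yP' => /path_edge_verts /andP [].
have [ik'|] := ltnP i k.
  have [i0|i_gt0] := posnP i.
    by move: pe_yP; rewrite i0 path_edge_sym B_edge_p0 // e_sym -i0.
  by rewrite inner_edge_path ?i_gt0 in pe_yP.
move=> ki; have ik_eq : i = k by lia.
subst i; rewrite eqxx inE e_iy /=; apply: contra yP' => /eqP ->.
exact: mem_path_verts (leq_pred k).
Qed.

Definition common_edge x y := pe x y || [&& x \in B :\: P, y \in B :\: P & e x y].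

(* In [T[B ∪ P]] the vertices of [N] hang at [p k]; in [T'[B ∪ P]] they hang at [p 0]. *)
Definition hang_edge v x y :=
  [|| common_edge x y, (x == v) && (y \in N) | (y == v) && (x \in N)].

Lemma common_edge_sym : symmetric common_edge.
Proof.
move=> x y; rewrite /common_edge path_edge_sym e_sym.
by case: (x \in _); case: (y \in _).
Qed.

Lemma hang_edge_sym v : symmetric (hang_edge v).
Proof. by move=> x y; rewrite /hang_edge common_edge_sym; congr (_ || _); apply: orbC. Qed.

Lemma hang_edge_pk_sub x y : hang_edge (p k) x y -> e x y.
Proof.
case/or3P => [/orP [/path_edge_sub // | /and3P [] //] | |] /andP [/eqP -> /[!inE] /andP [] //].
by rewrite e_sym.
Qed.

Local Notation S := (B :|: P).

Lemma S_notin_P x : x \in S -> x \notin P -> x \in B :\: P.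
Proof. by rewrite in_setU in_setD => /orP [-> ->|->]. Qed.

Lemma induced_edgeE x y : x \in S -> y \in S -> e x y = hang_edge (p k) x y.
Proof.
move=> xS yS; apply/idP/idP => [e_xy|]; last exact: hang_edge_pk_sub.
have [xP|xP'] := boolP (x \in P); have [yP|yP'] := boolP (y \in P).
- by rewrite /hang_edge /common_edge (P_edge_path _ _ xP yP e_xy).
- by rewrite /hang_edge (P_BDP_edge _ _ xP (S_notin_P _ yS yP') e_xy) !orbT.
- rewrite hang_edge_sym /hang_edge (P_BDP_edge _ _ yP (S_notin_P _ xS xP')) ?orbT //.
  by rewrite e_sym.
- by rewrite /hang_edge /common_edge !S_notin_P ?e_xy ?orbT.
Qed.

Lemma common_edge_not_pk x y : common_edge x y ->
  ~~ ((x == p k) && (y \in N)) && ~~ ((y == p k) && (x \in N)).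
Proof.
have pk_BDP : p k \in B :\: P = false by rewrite inE mem_path_verts.
case/orP => [/path_edge_verts | ] /andP [xP yP]; apply/andP; split;
  apply/negP => /andP [/eqP x_pk /N_notin_P]; rewrite ?xP ?yP //;
  by move: xP yP; rewrite ?x_pk ?pk_BDP // => _ /andP [].
Qed.

Lemma transfer_edgeE x y :
  x \in S -> y \in S -> transfer e p k x y = hang_edge (p 0) x y.
Proof.
move=> xS yS; rewrite /transfer (induced_edgeE _ _ xS yS) /hang_edge.
have [c_xy|_] /= := boolP (common_edge x y); last by case: (_ && (y \in N)); case: (_ && (x \in N)).
by case/andP: (common_edge_not_pk _ _ c_xy) => -> ->.
Qed.

(* The reversal [p i |-> p (k - i)] of the path, identity off [P]; it maps [T[B ∪ P]]
   onto [T'[B ∪ P]]. *)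
Definition flip x := if [pick i : 'I_k.+1 | p i == x] is Some i then p (k - i) else x.

Lemma flip_p i : i <= k -> flip (p i) = p (k - i).
Proof.
move=> ik; rewrite /flip; case: pickP => [j /eqP/p_inj-> // | /(_ (Ordinal (ik : i < k.+1)))].
  by rewrite inE -ltnS.
by rewrite eqxx.
Qed.

Lemma flip_out x : x \notin P -> flip x = x.
Proof.
rewrite /flip; case: pickP => // j /eqP <-.
by rewrite mem_path_verts // -ltnS.
Qed.

Lemma flipK : involutive flip.
Proof.
move=> x; have [/path_verts_inv [i ik ->]|xP'] := boolP (x \in P); last by rewrite !flip_out.
by rewrite !flip_p ?leq_subr ?subKn.
Qed.

Lemma mem_flip_P x : (flip x \in P) = (x \in P).
Proof.
have [/path_verts_inv [i ik ->]|xP'] := boolP (x \in P); last by rewrite flip_out // (negPf xP').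
by rewrite flip_p // !mem_path_verts ?leq_subr.
Qed.

Lemma flip_eq_p0 x : (flip x == p 0) = (x == p k).
Proof.
have [/path_verts_inv [i ik ->]|xP'] := boolP (x \in P).
  by rewrite flip_p // !p_eq ?leq_subr //; lia.
rewrite flip_out //; apply/eqP/eqP => x_p; move: xP';
  by rewrite x_p mem_path_verts.
Qed.

Lemma flip_inj : injective flip.
Proof. exact: inv_inj flipK. Qed.

Lemma path_edge_flip x y : pe (flip x) (flip y) = pe x y.
Proof.
suff flip_pe u v : pe u v -> pe (flip u) (flip v).
  by apply/idP/idP => [/flip_pe|/flip_pe //]; rewrite !flipK.
case/path_edge_inv => i ik [] [-> ->]; rewrite !flip_p ?(ltnW ik) //;
  rewrite (_ : k - i = (k - i.+1).+1); try lia.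
- by rewrite path_edge_step_rev; lia.
- by rewrite path_edge_step; lia.
Qed.

Lemma mem_flip_BDP x : (flip x \in B :\: P) = (x \in B :\: P).
Proof.
have [xP|/flip_out -> //] := boolP (x \in P).
by rewrite !in_setD mem_flip_P xP.
Qed.

Lemma mem_flip_N x : (flip x \in N) = (x \in N).
Proof.
have [xP|/flip_out -> //] := boolP (x \in P).
by apply/idP/idP => /N_notin_P; rewrite ?mem_flip_P xP.
Qed.

Lemma mem_flip_S x : (flip x \in S) = (x \in S).
Proof.
have [xP|/flip_out -> //] := boolP (x \in P).
by rewrite !in_setU mem_flip_P xP !orbT.
Qed.

Lemma common_edge_flip x y : common_edge (flip x) (flip y) = common_edge x y.
Proof.
rewrite /common_edge path_edge_flip !mem_flip_BDP; congr (_ || _).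
have [xBP|] := boolP (x \in B :\: P); have [yBP|] //= := boolP (y \in B :\: P).
by move: xBP yBP; rewrite !in_setD => /andP [/flip_out -> _] /andP [/flip_out -> _].
Qed.

Lemma hang_edge_flip x y : hang_edge (p 0) (flip x) (flip y) = hang_edge (p k) x y.
Proof. by rewrite /hang_edge common_edge_flip !flip_eq_p0 !mem_flip_N. Qed.

Lemma induced_transfer_flip x y :
  induced e S x y = induced (transfer e p k) S (flip x) (flip y).
Proof.
rewrite /induced !mem_flip_S.
have [xS|] := boolP (x \in S); have [yS|] //= := boolP (y \in S).
by rewrite induced_edgeE // transfer_edgeE ?mem_flip_S // hang_edge_flip.
Qed.

Lemma induced_edge_path i y : i < k -> induced e S (p i) y -> pe (p i) y.
Proof.
move=> ik /and3P [piS yS]; rewrite induced_edgeE // /hang_edge /common_edge.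
have piP : p i \in P by rewrite mem_path_verts // ltnW.
rewrite p_eq ?(ltnW ik) // (_ : i == k = false); last by lia.
have piN : (p i \in N) = false := contraTF (@N_notin_P _) piP.
by rewrite in_setD piP piN /= !andbF !orbF.
Qed.

Lemma path_edge_induced_transfer x y : pe x y -> induced (transfer e p k) S x y.
Proof.
move=> pe_xy; have /andP [xP yP] := path_edge_verts _ _ pe_xy.
have [xS yS] : x \in S /\ y \in S by rewrite !in_setU xP yP !orbT.
by rewrite /induced xS yS transfer_edgeE // /hang_edge /common_edge pe_xy.
Qed.

Lemma nwalks_induced_transfer_p0 l : ~~ odd k ->
  nwalks (induced e S) l (p 0) <= nwalks (induced (transfer e p k) S) l (p 0).
Proof.
move=> k_even; set m := k./2.
have km : k = m + m by rewrite addnn -[LHS]odd_double_half (negPf k_even).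
pose Q := [pred x | [exists i : 'I_m.+1, x == p i]].
have Q_p j : j <= m -> Q (p j) by move=> jm; apply/existsP; exists (inord j); rewrite inordK.
apply: (@nwalks_le_on _ _ _ Q (p m)); last exact: Q_p.
- move=> x /existsP [i /eqP ->] pi_pm y G_iy.
  have im : i < m by rewrite ltn_neqAle -ltnS ltn_ord andbT; apply: contraNneq pi_pm => ->.
  have pe_iy : pe (p i) y by apply: induced_edge_path G_iy; lia.
  split; first exact: path_edge_induced_transfer.
  have [j jk [[/eqP pi_pj ->]|[-> /eqP pi_pj]]] := path_edge_inv _ _ pe_iy;
    rewrite p_eq in pi_pj; try lia; apply: Q_p; lia.
- move=> l'; rewrite (nwalks_iso _ _ _ _ flip_inj induced_transfer_flip) flip_p; last by lia.
  by rewrite (_ : k - m = m) //; lia.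
Qed.

End PathInTree.

Local Open Scope ring_scope.

Theorem corollary3 (V : finType) (e : rel V) (p : nat -> V) (k : nat) :
  is_tree e ->
  (1 <= k)%N ->
  {in [pred i | (i <= k)%N] &, injective p} ->
  (forall i, (i < k)%N -> e (p i) (p i.+1)) ->
  (forall i, (0 < i < k)%N -> deg e (p i) = 2%N) ->
  ~~ odd k ->
  forall l : nat, (1 <= l)%N ->
    (nwalks (induced e (compB e p k :|: path_verts p k)) l (p 0%N))%:Z
      - (nwalks (path_edge p k) l (p 0%N))%:Z
    <= (nwalks (induced (transfer e p k) (compB e p k :|: path_verts p k)) l (p 0%N))%:Z
      - (nwalks (path_edge p k) l (p 0%N))%:Z.
Proof.
move=> e_tree k_gt0 p_inj p_edge p_deg2 k_even l _.
by rewrite lerD2r lez_nat nwalks_induced_transfer_p0.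
Qed.
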